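(* Let $\Delta,\bar\Delta\in\mathbb{C}^*$ and let $h(\partial,\lambda)=\sum_{i=0}^m a_i\partial^{m-i}\lambda^i\in\mathbb{C}[\partial,\lambda]$ be a nonzero homogeneous polynomial of degree $m$ satisfying $$\big(\tfrac12\lambda-\mu\big)h(\partial,\lambda+\mu)=(\partial+\bar\Delta\lambda)h(\partial+\lambda,\mu)-(\partial+\mu+\Delta\lambda)h(\partial,\mu).$$ Then $a_0\neq0$, $m\in\{0,1,2\}$, and exactly one of the following holds: (i) $\Delta-\bar\Delta=-\tfrac12$ and $h(\partial,\lambda)=a_0$; (ii) $\Delta-\bar\Delta=\tfrac12$ and $h(\partial,\lambda)=a_0(\partial+2\bar\Delta\lambda)$; (iii) $(\Delta,\bar\Delta)=(1,-\tfrac12)$ and $h(\partial,\lambda)=a_0(\partial^2-\lambda^2)$. *)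

(* The base field C is an arbitrary numClosedFieldType
   (algebraically closed field of characteristic 0 with a norm), which
   includes the complex numbers. *)
From HB Require Import structures.
From mathcomp Require Import all_boot all_order all_algebra.
Set Implicit Arguments. Unset Strict Implicit. Unset Printing Implicit Defensive.
Import Order.TTheory GRing.Theory Num.Theory.
Local Open Scope ring_scope.

Definition hpoly {C : numClosedFieldType} (m : nat) (a : nat -> C) (d l : C) : C :=
  \sum_(i < m.+1) a i * d ^+ (m - i) * l ^+ i.

Definition exactly_one3 (P Q R : Prop) : Prop :=
  (P /\ ~ Q /\ ~ R) \/ (~ P /\ Q /\ ~ R) \/ (~ P /\ ~ Q /\ R).

(* Setting mu = 0 in the functional equation gives l * h(d, l) = 2 a_0 g(d, l)
   with g = hnum D Db m, so h is determined by a_0 and a_0 <> 0.  As g(1, l) is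
   divisible by l, h(1, .) = 2 a_0 g(1, .) / l holds as a polynomial identity,
   and its value at l = 0 forces D - Db = m - 1/2.  For m >= 2 the functional
   equation at (0, 1, -1), (-1, 1, 1) and (0, 1, 1) gives D = 1 for even m,
   D + Db = 1 for odd m, and 2^m (3 + 2 Db) = 4 (1 + D); together these leave
   only m = 2, D = 1, Db = -1/2. *)

From HB Require Import structures.
From mathcomp Require Import all_boot all_order all_algebra.
From mathcomp Require Import ring zify.
Set Implicit Arguments. Unset Strict Implicit. Unset Printing Implicit Defensive.
Import Order.TTheory GRing.Theory Num.Theory.
Local Open Scope ring_scope.

Lemma poly_eq0_on_nonzero (R : numDomainType) (p : {poly R}) :
  (forall y, y != 0 -> p.[y] = 0) -> p = 0.
Proof.
move=> p0; apply: (@roots_geq_poly_eq0 _ _ (mkseq (fun i => i.+1%:R) (size p))).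
- by apply/allP => _ /mapP[i _ ->]; apply/rootP/p0; rewrite pnatr_eq0.
- by rewrite map_inj_uniq ?iota_uniq // => i j /eqP; rewrite eqr_nat => /eqP [].
- by rewrite size_mkseq.
Qed.

Lemma exp2_eqn_odd (m : nat) : (1 < m)%N -> (9 * 2 ^ m <> 4 * m + 10 + 2 * m * 2 ^ m)%N.
Proof.
move=> m_gt1; have [m_ge5|m_lt5] := leqP 5 m; first by have := expn_gt0 2 m; nia.
by case: m m_gt1 m_lt5 => [|[|[|[|[|]]]]].
Qed.

Lemma exp2_eqn_even (m : nat) : ~~ odd m -> (6 * 2 ^ m = 8 + 2 * m * 2 ^ m)%N -> m = 2%N.
Proof.
move=> ev; have [m_ge3|m_lt3] := leqP 3 m; first by have := expn_gt0 2 m; nia.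
by case: m ev m_lt3 => [|[|[|]]].
Qed.

Lemma exactly_one3_of_sep (T : Type) (x p q r : T) (P Q R : Prop) :
    p <> q -> p <> r -> q <> r ->
    (P -> x = p) -> (Q -> x = q) -> (R -> x = r) ->
  P \/ Q \/ R -> exactly_one3 P Q R.
Proof.
move=> pq pr qr xP xQ xR.
by case=> [HP|[HQ|HR]]; [left|right; left|right; right]; intuition congruence.
Qed.

Definition hnum {R : comPzRingType} (D Db : R) (m : nat) (d l : R) : R :=
  (d + Db * l) * (d + l) ^+ m - (d + D * l) * d ^+ m.

(* The quotient hnum D Db m 1 y / y, as a polynomial in y. *)
Definition hquot {R : comNzRingType} (D Db : R) (m : nat) : {poly R} :=
  \sum_(i < m) ('X + 1) ^+ i + Db *: ('X + 1) ^+ m - D%:P.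

Lemma hquotE (R : comNzRingType) (D Db : R) m y :
  y * (hquot D Db m).[y] = hnum D Db m 1 y.
Proof.
rewrite /hquot /hnum !hornerE horner_sum.
under eq_bigr do rewrite !hornerE.
have geom : y * \sum_(i < m) (y + 1) ^+ i = (y + 1) ^+ m - 1 by rewrite subrX1 addrK.
by rewrite mulrBr mulrDr geom expr1n [1 + y]addrC; ring.
Qed.

Lemma hquot0 (R : comNzRingType) (D Db : R) m : (hquot D Db m).[0] = m%:R + Db - D.
Proof.
rewrite /hquot !hornerE horner_sum.
under eq_bigr do rewrite !hornerE expr1n.
by rewrite expr1n mulr1 sumr_const card_ord.
Qed.

Lemma hpoly_l0 (C : numClosedFieldType) m (a : nat -> C) d :
  hpoly m a d 0 = a 0%N * d ^+ m.
Proof.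
rewrite /hpoly big_ord_recl /= expr0 mulr1 subn0 big1 ?addr0 // => i _.
by rewrite expr0n mulr0.
Qed.

Lemma hpoly0 (C : numClosedFieldType) (a : nat -> C) d l : hpoly 0 a d l = a 0%N.
Proof. by rewrite /hpoly big_ord1 !expr0 !mulr1. Qed.

Lemma hpoly1E (C : numClosedFieldType) m (a : nat -> C) y :
  hpoly m a 1 y = (\poly_(i < m.+1) a i).[y].
Proof. by rewrite horner_poly; apply: eq_bigr => i _; rewrite expr1n mulr1. Qed.

Section FunctionalEquation.

Variables (C : numClosedFieldType) (D Db : C) (m : nat) (a : nat -> C).

Hypothesis hFE : forall d l mu : C,
  (2^-1 * l - mu) * hpoly m a d (l + mu)
  = (d + Db * l) * hpoly m a (d + l) mu - (d + mu + D * l) * hpoly m a d mu.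

Let two_neq0 : (2 : C) != 0. Proof. by rewrite pnatr_eq0. Qed.

Lemma hpoly_mul_l d l : l * hpoly m a d l = 2 * a 0%N * hnum D Db m d l.
Proof.
have := hFE d l 0; rewrite !addr0 subr0 !hpoly_l0 => E.
transitivity (2 * (2^-1 * l * hpoly m a d l)); first by field.
by rewrite E /hnum; ring.
Qed.

Lemma hpoly1_poly : \poly_(i < m.+1) a i = (2 * a 0%N) *: hquot D Db m.
Proof.
apply/eqP; rewrite -subr_eq0; apply/eqP/poly_eq0_on_nonzero => y y0.
apply: (mulfI y0).
by rewrite hornerD hornerN hornerZ -hpoly1E mulr0 mulrBr hpoly_mul_l mulrCA hquotE subrr.
Qed.

Lemma a0_neq0 : (exists i, (i <= m)%N /\ a i != 0) -> a 0%N != 0.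
Proof.
case=> i [im ai]; apply: contraNneq ai => a00.
have := coef_poly m.+1 a i; rewrite ltnS im => <-.
by rewrite hpoly1_poly a00 mulr0 scale0r coef0.
Qed.

Hypothesis a0_nz : a 0%N != 0.

Lemma D_sub_Db : D - Db = m%:R - 2^-1.
Proof.
have := congr1 (horner^~ 0) hpoly1_poly.
rewrite hornerZ hquot0 horner_coef0 coef_poly /= => E.
have {}E : a 0%N * (2 * (m%:R + Db - D) - 1) = 0.
  by rewrite mulrBr mulr1 mulrA [a _ * 2]mulrC -E subrr.
move/eqP: E; rewrite mulf_eq0 (negbTE a0_nz) subr_eq0 => /eqP E.
have -> : (2^-1 : C) = 2^-1 * (2 * (m%:R + Db - D)) by rewrite E mulr1.
by field.
Qed.

Lemma hpolyE d l : l != 0 -> hpoly m a d l = 2 * a 0%N * hnum D Db m d l / l.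
Proof. by move=> l0; rewrite -hpoly_mul_l mulrC mulKf. Qed.

Lemma hpoly_eq_of_mul_l (f : C -> C -> C) :
    (forall d, f d 0 = a 0%N * d ^+ m) ->
    (forall d l, l * f d l = 2 * a 0%N * hnum D Db m d l) ->
  forall d l, hpoly m a d l = f d l.
Proof.
move=> f_l0 f_mul d l; have [->|l0] := eqVneq l 0; first by rewrite hpoly_l0 f_l0.
by apply: (mulfI l0); rewrite hpoly_mul_l f_mul.
Qed.

Lemma hpoly_deg1 : m = 1%N -> forall d l, hpoly m a d l = a 0%N * (d + 2 * Db * l).
Proof.
move=> m1; apply: hpoly_eq_of_mul_l => [d|d l]; first by rewrite m1 mulr0 addr0.
have hD : D = Db + 2^-1 by rewrite -[D](subrK Db) D_sub_Db m1; field.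
by rewrite /hnum m1 hD; field.
Qed.

Hypothesis m_gt1 : (1 < m)%N.
Hypothesis Db_nz : Db != 0.

Let zero_exp : (0 : C) ^+ m = 0. Proof. by rewrite expr0n gtn_eqF // ltnW. Qed.

Lemma D_eq1_of_even : ~~ odd m -> D = 1.
Proof.
move=> ev; have E := hFE 0 1 (-1).
rewrite addrN hpoly_l0 add0r !hpolyE ?oppr_eq0 ?oner_eq0 // /hnum in E.
rewrite !(addrN, add0r, mul0r, mulr0, zero_exp, expr1n, mul1r) in E.
rewrite -signr_odd (negbTE ev) expr0 in E.
apply/eqP; rewrite -subr_eq0; apply/eqP; apply: (mulfI (mulf_neq0 a0_nz Db_nz)).
by rewrite mulr0 -[RHS](mulr0 (- 4^-1)) [in RHS]E; field.
Qed.

Lemma DaddDb_eq1_of_odd : odd m -> D + Db = 1.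
Proof.
move=> od; have E := hFE (-1) 1 1.
rewrite addNr !hpolyE ?oner_eq0 // /hnum addKr in E.
rewrite !(addrN, addNr, add0r, mul0r, mulr0, zero_exp, expr1n, mul1r, mulr1) in E.
rewrite -signr_odd od expr1 in E; move/eqP: E; rewrite -subr_eq0 => /eqP E.
have : (D + Db - 1) * (2 * (1 - m%:R)) = 0.
  apply: (mulfI a0_nz); rewrite mulr0 -[RHS](mulr0 (-1)) -[in RHS]E.
  have -> : 1 - m%:R = Db - D + 2^-1 by rewrite -[Db - D]opprB D_sub_Db; field.
  by field.
move/eqP; rewrite !mulf_eq0 (negbTE two_neq0) !subr_eq0 [1 == _]eq_sym pnatr_eq1.
by rewrite gtn_eqF // !orbF => /eqP.
Qed.

Lemma exp2_relation : 2 ^+ m * (3 + 2 * Db) = 4 * (1 + D).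
Proof.
have E := hFE 0 1 1.
rewrite !hpolyE ?oner_eq0 // /hnum in E.
rewrite !(addrN, addNr, add0r, mul0r, mulr0, zero_exp, expr1n, mul1r, mulr1, subr0) in E.
move/eqP: E; rewrite eq_sym -subr_eq0 => /eqP E.
apply/eqP; rewrite -subr_eq0; apply/eqP; apply: (mulfI (mulf_neq0 a0_nz Db_nz)).
by rewrite mulr0 -[in RHS]E; field.
Qed.

Lemma m_eq2 : [/\ m = 2%N, D = 1 & Db = - 2^-1].
Proof.
have rel := exp2_relation; move/eqP: rel; rewrite -subr_eq0 => /eqP rel.
have hDDb := D_sub_Db.
have [od|ev] := boolP (odd m).
  have hDaddDb := DaddDb_eq1_of_odd od.
  have hD : D = ((D - Db) + (D + Db)) / 2 by field.
  have hDb : Db = ((D + Db) - (D - Db)) / 2 by field.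
  rewrite hDDb hDaddDb in hD hDb; rewrite hD hDb in rel.
  have : ((9 * 2 ^ m)%:R : C) = (4 * m + 10 + 2 * m * 2 ^ m)%:R.
    rewrite !natrD !natrM natrX; apply/eqP; rewrite -subr_eq0; apply/eqP.
    by rewrite -[RHS](mulr0 2) -[in RHS]rel; field.
  by move/eqP; rewrite eqr_nat => /eqP /(exp2_eqn_odd m_gt1).
have hD := D_eq1_of_even ev.
have hDb : Db = D - (D - Db) by rewrite opprB addrC subrK.
rewrite hDDb hD in hDb; rewrite hD hDb in rel.
have m2 : m = 2%N.
  apply: (exp2_eqn_even ev); apply/eqP; rewrite -(eqr_nat C) !natrD !natrM natrX.
  rewrite -subr_eq0; apply/eqP.
  by rewrite -[in RHS]rel; field.
by split=> //; rewrite hDb m2; field.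
Qed.

Lemma hpoly_deg2 : forall d l, hpoly m a d l = a 0%N * (d ^+ 2 - l ^+ 2).
Proof.
have [m2 hD hDb] := m_eq2; apply: hpoly_eq_of_mul_l => [d|d l].
  by rewrite m2 expr0n subr0.
by rewrite /hnum m2 hD hDb; field.
Qed.

End FunctionalEquation.

Theorem lemma3p6 (C : numClosedFieldType) (D Db : C) (m : nat) (a : nat -> C) :
  D != 0 -> Db != 0 ->
  (exists i : nat, (i <= m)%N /\ a i != 0) ->
  (forall d l mu : C,
      (2^-1 * l - mu) * hpoly m a d (l + mu)
      = (d + Db * l) * hpoly m a (d + l) mu - (d + mu + D * l) * hpoly m a d mu) ->
  a 0%N != 0 /\ (m <= 2)%N /\
  exactly_one3
    (D - Db = - 2^-1 /\ forall d l : C, hpoly m a d l = a 0%N)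
    (D - Db = 2^-1 /\ forall d l : C, hpoly m a d l = a 0%N * (d + 2 * Db * l))
    ((D, Db) = (1, - 2^-1) /\ forall d l : C, hpoly m a d l = a 0%N * (d ^+ 2 - l ^+ 2)).
Proof.
move=> _ Db_nz a_nz hFE; have a0_nz := a0_neq0 hFE a_nz.
have hDDb := D_sub_Db hFE a0_nz.
have sep i j : i != j -> (i%:R - 2^-1 : C) <> j%:R - 2^-1.
  by move=> ij /addIr/eqP; rewrite eqr_nat (negbTE ij).
have m_cases : [\/ m = 0%N, m = 1%N | [/\ m = 2%N, D = 1 & Db = - 2^-1]].
  have [m_le1|m_gt1] := leqP m 1; last by apply: Or33; apply: m_eq2.
  by move: m_le1; rewrite leq_eqVlt ltnS leqn0 => /orP[]/eqP; [apply: Or32|apply: Or31].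
split=> //; split; first by case: m_cases => [->|->|[->]].
apply: (exactly_one3_of_sep (x := D - Db) (sep 0 1 isT) (sep 0 2 isT) (sep 1 2 isT)).
- by case=> -> _; rewrite sub0r.
- by case=> -> _; field.
- by case=> [[-> ->]] _; field.
case: m_cases => [m0|m1|[m2 hD hDb]].
- by left; split=> [|d l]; rewrite ?hDDb m0 ?sub0r ?hpoly0.
- by right; left; split; [rewrite hDDb m1; field | exact: hpoly_deg1 hFE a0_nz m1].
- by right; right; split; [rewrite hD hDb | apply: (hpoly_deg2 hFE a0_nz _ Db_nz); rewrite m2].
Qed.
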